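(* Let $G=(V,E,w)$, $s$, $\tau$ (with $|\tau|\ge 2$) and a budget $b\ge 0$ be as in the context, and suppose that at least one feasible subgraph exists. Then among the maximizers of $\textsc{CD}_{\tau,s}(S)$ over all feasible subgraphs $S\subseteq G$, there is one that is a directed acyclic graph in which $s$ is the unique source (a source being a vertex $u$ with no edge $v\to u$ in the subgraph).
   Context: Let $G=(V,E,w)$ be a finite directed graph with non-negative edge weights $w:E\to\mathbb{R}_{\ge 0}$. A path from $u$ to $v$ in a subgraph $S\subseteq G$ is a sequence $u=v_0\to v_1\to\cdots\to v_k=v$ ($k\ge 0$) with each $v_i\to v_{i+1}$ an edge of $S$; for $i\le j$, $w_P(v_i,v_j)=\sum_{m=i}^{j-1} w(v_m\to v_{m+1})$. A vertex $y$ is reachable from $x$ in $S$ if there is a path from $x$ to $y$ in $S$ (a vertex is reachable from itself). Fix a start vertex $s\in V$ and a finite target set $\tau\subseteq V\setminus\{s\}$ with $|\tau|\ge 2$. The cost of a subgraph $S$ is $w(S)=\sum_{e\in E(S)} w(e)$. For a subgraph $S$ containing $s$ and $\tau$ in which every target is reachable from $s$: for a path $P=v_0\to\cdots\to v_k$ in $S$ with $v_0=s$, $v_k=t\in\tau$, let $\ell$ be the largest index such that some target in $\tau\setminus\{t\}$ is reachable from $v_\ell$ in $S$; the last deceptive point is $l(P,t)=v_\ell$. The unique distance of $t\in\tau$ is $\textsc{U}_S(t)=\min\{w_P(l(P,t),t): P \text{ a path in } S \text{ from } s \text{ to } t\}$, and the counterdeceptiveness of $S$ is $\textsc{CD}_{\tau,s}(S)=\min_{t\in\tau}\textsc{U}_S(t)$.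 Given a budget $b\ge 0$, a subgraph $S\subseteq G$ is feasible if $s\in V(S)$, $\tau\subseteq V(S)$, every target is reachable from $s$ in $S$, and $w(S)\le b$. A maximizer is a feasible $S$ maximizing $\textsc{CD}_{\tau,s}(S)$ among feasible subgraphs. *)

From mathcomp Require Import all_boot all_order all_algebra.
From mathcomp Require Import reals.
Set Implicit Arguments. Unset Strict Implicit. Unset Printing Implicit Defensive.
Import Order.TTheory GRing.Theory Num.Theory.
Local Open Scope ring_scope.

(* The graph G = (V, E, w): V a finite type of vertices, E : rel V the
   directed edge relation, w u v the weight of the edge u -> v
   (only meaningful when E u v).  A path v_0 -> ... -> v_k is represented by
   its start x = v_0 and the list p = [v_1; ...; v_k]. *)

Section Deceptive.
Variables (R : realType) (V : finType) (E : rel V) (w : V -> V -> R).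

Definition is_subgraph (VS : {set V}) (ES : {set V * V}) : Prop :=
  forall e, e \in ES -> [&& E e.1 e.2, e.1 \in VS & e.2 \in VS].

Definition cost (ES : {set V * V}) : R := \sum_(e in ES) w e.1 e.2.

Definition spath (ES : {set V * V}) (x : V) (p : seq V) : bool :=
  path (fun a b => (a, b) \in ES) x p.

Definition reachable (ES : {set V * V}) (x y : V) : Prop :=
  exists p, spath ES x p /\ last x p = y.

(* w_P(v_i, v_j) for the path P = x :: p  (v_m = nth x (x :: p) m) *)
Definition pweight (x : V) (p : seq V) (i j : nat) : R :=
  \sum_(i <= m < j) w (nth x (x :: p) m) (nth x (x :: p) m.+1).

(* l is the index of the last deceptive point of the path P = x :: p
   ending at target t: the largest index l <= k = size p such that some
   target of tau other than t is reachable from v_l in ES. *)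
Definition is_ldp (ES : {set V * V}) (tau : {set V}) (t : V)
    (x : V) (p : seq V) (l : nat) : Prop :=
  [/\ (l <= size p)%N,
      (exists2 t', t' \in tau :\ t & reachable ES (nth x (x :: p) l) t') &
      forall m, (l < m <= size p)%N ->
        ~ (exists2 t', t' \in tau :\ t & reachable ES (nth x (x :: p) m) t')].

(* u = U_S(t): the minimum of w_P(l(P,t), t) over paths P from s to t in S
   (the minimum exists and equals u). *)
Definition is_unique_dist (ES : {set V * V}) (s : V) (tau : {set V})
    (t : V) (u : R) : Prop :=
  (exists p l, [/\ spath ES s p, last s p = t, is_ldp ES tau t s p l &
                   u = pweight s p l (size p)]) /\
  (forall p l, spath ES s p -> last s p = t -> is_ldp ES tau t s p l ->
     u <= pweight s p l (size p)).

(* c = CD_{tau,s}(S) = min over t in tau of U_S(t) *)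
Definition is_CD (ES : {set V * V}) (s : V) (tau : {set V}) (c : R) : Prop :=
  (forall t, t \in tau -> exists u, is_unique_dist ES s tau t u) /\
  (exists2 t, t \in tau & is_unique_dist ES s tau t c) /\
  (forall t u, t \in tau -> is_unique_dist ES s tau t u -> c <= u).

Definition feasible (s : V) (tau : {set V}) (b : R)
    (VS : {set V}) (ES : {set V * V}) : Prop :=
  [/\ is_subgraph VS ES, s \in VS, tau \subset VS,
      (forall t, t \in tau -> reachable ES s t) & cost ES <= b].

Definition is_maximizer (s : V) (tau : {set V}) (b : R)
    (VS : {set V}) (ES : {set V * V}) : Prop :=
  feasible s tau b VS ES /\
  exists c, is_CD ES s tau c /\
    forall VS' ES' c', feasible s tau b VS' ES' -> is_CD ES' s tau c' ->
      c' <= c.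

Definition acyclic (ES : {set V * V}) : Prop :=
  forall x p, spath ES x p -> last x p = x -> p = [::].

Definition is_source (ES : {set V * V}) (u : V) : Prop :=
  forall v, (v, u) \notin ES.

Definition unique_source (VS : {set V}) (ES : {set V * V}) (s : V) : Prop :=
  s \in VS /\ is_source ES s /\
  forall u, u \in VS -> is_source ES u -> u = s.

End Deceptive.

From mathcomp Require Import all_boot all_order all_algebra.
From mathcomp Require Import reals.
From Stdlib Require Import Classical_Prop.
Set Implicit Arguments. Unset Strict Implicit. Unset Printing Implicit Defensive.
Import Order.TTheory GRing.Theory Num.Theory.
Local Open Scope ring_scope.

(* Shrink the edge set of a maximizer to an inclusion-minimal subset in which
   all targets stay reachable from s.  In such a subgraph every edge is
   indispensable, so s has in-degree 0 and every other vertex in-degree at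
   most 1: it is an arborescence rooted at s, hence acyclic with s as its only
   source.  Deleting edges only deletes paths and reachability, so the last
   deceptive point of a surviving path can only move towards t; with
   non-negative weights this cannot decrease any unique distance, and the
   shrunk subgraph is still a maximizer.  Since edge sets and (on an acyclic
   graph) simple paths are finite in number, all the minima and maxima
   involved exist. *)

Lemma seq_extremum (X : eqType) (T : Type) (ord : rel T) (L : seq X)
    (Q : X -> T -> Prop) :
  total ord -> transitive ord ->
  (forall x r1 r2, Q x r1 -> Q x r2 -> r1 = r2) ->
  (exists2 x, x \in L & exists r, Q x r) ->
  exists x r, [/\ x \in L, Q x r & forall y r', y \in L -> Q y r' -> ord r r'].
Proof.
move=> ord_total ord_trans Qfun; elim: L => [|a L IH] [x xL [r Qxr]] //.
have ord_refl r0 : ord r0 r0 by case/orP: (ord_total r0 r0).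
have [[ra Qa]|noQa] := classic (exists ra, Q a ra); last first.
  have xL' : x \in L.
    by case/predU1P: xL => // eqxa; case: noQa; exists r; rewrite -eqxa.
  have [m [rm [mL Qm minm]]] := IH (ex_intro2 _ _ x xL' (ex_intro _ r Qxr)).
  exists m, rm; split; first by rewrite inE mL orbT.
    by [].
  move=> y r' /[!inE] /orP[/eqP-> Qa|]; [by case: noQa; exists r' | exact: minm].
have [[y yL [ry Qy]]|noL] := classic (exists2 y, y \in L & exists r, Q y r).
  have [m [rm [mL Qm minm]]] := IH (ex_intro2 _ _ y yL (ex_intro _ ry Qy)).
  have [le_ra_rm|le_rm_ra] := orP (ord_total ra rm).
    exists a, ra; split; first by rewrite inE eqxx.
      by [].
    move=> z r' /[!inE] /orP[/eqP-> Qz|zL Qz]; first by rewrite (Qfun _ _ _ Qz Qa).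
    exact: ord_trans le_ra_rm (minm _ _ zL Qz).
  exists m, rm; split; first by rewrite inE mL orbT.
    by [].
  move=> z r' /[!inE] /orP[/eqP-> Qz|]; last exact: minm.
  by rewrite (Qfun _ _ _ Qz Qa).
exists a, ra; split; first by rewrite inE eqxx.
  by [].
move=> z r' /[!inE] /orP[/eqP-> Qz|zL Qz]; first by rewrite (Qfun _ _ _ Qz Qa).
by case: noL; exists z => //; exists r'.
Qed.

Fixpoint seqs_upto (T : finType) (n : nat) : seq (seq T) :=
  if n is n'.+1 then [::] :: [seq x :: q | x <- enum T, q <- seqs_upto T n']
  else [:: [::]].

Lemma mem_seqs_upto (T : finType) n (q : seq T) :
  (size q <= n)%N -> q \in seqs_upto T n.
Proof.
elim: n q => [|n IH] [|x q] //= size_q; rewrite inE; apply/orP; right.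
by apply: (allpairs_f (fun x q => x :: q)); [rewrite mem_enum | apply: IH].
Qed.

Section Counterdeceptiveness.
Variables (R : realType) (V : finType) (E : rel V) (w : V -> V -> R).
Variables (s : V) (tau : {set V}).
Implicit Types (F : {set V * V}) (x y : V) (p q : seq V).

Definition edge_rel F : rel V := fun a c => (a, c) \in F.

Definition nonneg F := forall a c, (a, c) \in F -> 0 <= w a c.

Lemma reachableP F x y : reflect (reachable F x y) (connect (edge_rel F) x y).
Proof. by apply: (iffP connectP) => [[p ? ?]|[p []]]; exists p. Qed.

Lemma reachable_refl F x : reachable F x x.
Proof. by exists [::]. Qed.

Lemma reachable_rcons F x y z : reachable F x y -> (y, z) \in F -> reachable F x z.
Proof.
move=> [p [xp <-]] yz; exists (rcons p z).
by rewrite /spath rcons_path -/(spath F x p) xp yz last_rcons.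
Qed.

Lemma spath_subset F1 F2 x p : F1 \subset F2 -> spath F1 x p -> spath F2 x p.
Proof. by move=> /subsetP F12; apply: sub_path => a c /F12. Qed.

Lemma reachable_subset F1 F2 x y :
  F1 \subset F2 -> reachable F1 x y -> reachable F2 x y.
Proof. by move=> F12 [p [xp xpy]]; exists p; split=> //; apply: spath_subset xp. Qed.

Lemma reachable_ind F (P : V -> Prop) x y : P x ->
  (forall a c, (a, c) \in F -> P a -> P c) -> reachable F x y -> P y.
Proof.
move=> Px closedP [p [+ <-]]; elim: p x Px => [|z p IH] x Px //= /andP[xz zp].
exact: IH (closedP _ _ xz Px) zp.
Qed.

Lemma spath_setD1 F x p a v :
  spath F x p -> v \notin p -> spath (F :\ (a, v)) x p.
Proof.
elim: p x => [|y p IH] x //= /andP[xy yp]; rewrite inE negb_or => /andP[yv vp].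
rewrite IH // andbT in_setD1 xy andbT.
by apply: contra yv => /eqP[_ ->].
Qed.

Lemma acyclic_path_uniq F x p : acyclic F -> spath F x p -> uniq (x :: p).
Proof.
move=> acF; elim: p x => [|y p IH] x // xyp.
have /= -> := IH y (path_sorted xyp); rewrite andbT.
apply/negP => x_yp; move: xyp; case/splitPr: x_yp => p1 p2.
rewrite /spath -cat_rcons cat_path => /andP[/acF cycle_x _].
by case: p1 cycle_x => [|? ?] /(_ (last_rcons _ _ _)).
Qed.

Definition deceptive F t y : bool :=
  [exists t' in tau :\ t, connect (edge_rel F) y t'].

Lemma deceptiveP F t y :
  reflect (exists2 t', t' \in tau :\ t & reachable F y t') (deceptive F t y).
Proof.
apply: (iffP existsP) => [[t' /andP[t'_tau /reachableP]]|[t' t'_tau /reachableP]];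
  by exists t' => //; rewrite t'_tau.
Qed.

Lemma ldp_exists F t x p k : (k <= size p)%N -> deceptive F t (nth x (x :: p) k) ->
  exists2 l, (k <= l)%N & is_ldp F tau t x p l.
Proof.
move=> kp dec_k.
pose P m := (m <= size p)%N && deceptive F t (nth x (x :: p) m).
have P_bounded m : P m -> (m <= size p)%N by case/andP.
have Pk : P k by rewrite /P kp dec_k.
case: (ex_maxnP (ex_intro P k Pk) P_bounded).
move=> l /andP[lp /deceptiveP dec_l] l_max; exists l; first exact: l_max.
split=> // m /andP[lm mp] /deceptiveP dec_m.
by have := l_max m; rewrite /P mp dec_m leqNgt lm => /(_ isT).
Qed.

Lemma exists_other_target t : (2 <= #|tau|)%N -> exists t', t' \in tau :\ t.
Proof.
move=> tau2; apply/set0Pn; apply: contraTneq tau2 => tau_t0.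
by rewrite (cardsD1 t) tau_t0 cards0 addn0; case: (t \in tau).
Qed.

Lemma pweight_split x p i j k : (i <= j <= k)%N ->
  pweight w x p i k = pweight w x p i j + pweight w x p j k.
Proof. by move=> /andP[ij jk]; rewrite /pweight (big_cat_nat ij jk). Qed.

Lemma pweight_ge0 F x p i k : nonneg F -> spath F x p -> (k <= size p)%N ->
  0 <= pweight w x p i k.
Proof.
move=> nnF /(pathP x) xp kp; rewrite /pweight big_nat_cond; apply: sumr_ge0 => m.
by case/andP=> /andP[_ mk] _; apply/nnF/xp/(leq_trans mk kp).
Qed.

Lemma pweight_le_suffix F x p i j : nonneg F -> spath F x p ->
  (i <= j <= size p)%N -> pweight w x p j (size p) <= pweight w x p i (size p).
Proof.
move=> nnF xp ijp; rewrite (pweight_split _ _ ijp) lerDr.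
by apply: pweight_ge0 nnF xp _; case/andP: ijp.
Qed.

Lemma unique_dist_fun F t u1 u2 :
  is_unique_dist w F s tau t u1 -> is_unique_dist w F s tau t u2 -> u1 = u2.
Proof.
move=> [[p1 [l1 [? ? ? ->]]] min1] [[p2 [l2 [? ? ? ->]]] min2].
by apply: le_anti; rewrite min1 ?min2.
Qed.

Lemma CD_fun F c1 c2 : is_CD w F s tau c1 -> is_CD w F s tau c2 -> c1 = c2.
Proof.
move=> [_ [[t1 t1_tau u1] min1]] [_ [[t2 t2_tau u2] min2]].
by apply: le_anti; rewrite (min1 _ _ t2_tau u2) (min2 _ _ t1_tau u1).
Qed.

(* Removing edges keeps the deceptiveness witness of the last deceptive point,
   so in the larger graph that point lies at least as far along the path. *)
Lemma CD_antitone F F' c c' : F' \subset F -> nonneg F ->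
  is_CD w F s tau c -> is_CD w F' s tau c' -> c <= c'.
Proof.
move=> F'F nnF [ud_F [_ min_c]] [_ [[t t_tau [[p [l' [sp' pt ldp' ->]]] _]] _]].
have [u ud_t] := ud_F t t_tau.
have sp := spath_subset F'F sp'.
case: ldp' => l'p [t' t'_tau reach'] _.
have [l l'l ldp] := ldp_exists l'p
  (introT (deceptiveP _ _ _) (ex_intro2 _ _ t' t'_tau (reachable_subset F'F reach'))).
apply: le_trans (min_c _ _ t_tau ud_t) _.
apply: le_trans (ud_t.2 _ _ sp pt ldp) _.
by apply: pweight_le_suffix nnF sp _; rewrite l'l; case: ldp.
Qed.

Definition reaches_targets F := forall t, t \in tau -> reachable F s t.

Lemma unique_dist_exists F t : acyclic F -> (2 <= #|tau|)%N -> reaches_targets F ->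
  t \in tau -> exists u, is_unique_dist w F s tau t u.
Proof.
move=> acF tau2 reachF t_tau.
pose Q (pl : seq V * nat) u := [/\ spath F s pl.1, last s pl.1 = t,
  is_ldp F tau t s pl.1 pl.2 & u = pweight w s pl.1 pl.2 (size pl.1)].
pose L := [seq (p, l) | p <- seqs_upto V #|V|, l <- iota 0 #|V|.+1].
have mem_L p l : spath F s p -> (l <= size p)%N -> (p, l) \in L.
  move=> sp lp; have /card_uniqP/= size_p := acyclic_path_uniq acF sp.
  have p_short : (size p < #|V|)%N by rewrite -size_p max_card.
  apply: (allpairs_f (fun p l => (p, l))); first exact/mem_seqs_upto/ltnW.
  by rewrite mem_iota /= ltnS (leq_trans lp) // ltnW.
have [p [sp pt]] := reachF t t_tau.
have [t' t'_tau] := exists_other_target t tau2.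
have t'_reach : deceptive F t (nth s (s :: p) 0).
  by apply/deceptiveP; exists t' => //; apply: reachF; case/setD1P: t'_tau.
have [l _ ldp] := ldp_exists (leq0n _) t'_reach.
have Q_fun pl u1 u2 : Q pl u1 -> Q pl u2 -> u1 = u2 by move=> [_ _ _ ->] [_ _ _ ->].
have [|pl [u [_ [sp0 pt0 ldp0 ->] u_min]]] :=
  @seq_extremum _ _ <=%R L Q le_total (@le_trans _ _) Q_fun.
  exists (p, l); last by exists (pweight w s p l (size p)).
  by apply: mem_L => //; case: ldp.
exists (pweight w s pl.1 pl.2 (size pl.1)); split; first by exists pl.1, pl.2.
move=> p' l' sp' pt' ldp'; have pl'_L : (p', l') \in L by apply: mem_L => //; case: ldp'.
exact: u_min pl'_L _.
Qed.

Lemma CD_exists F : acyclic F -> (2 <= #|tau|)%N -> reaches_targets F ->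
  exists c, is_CD w F s tau c.
Proof.
move=> acF tau2 reachF; have ud_F := unique_dist_exists acF tau2 reachF.
have [t0 t0_tau] : exists t, t \in tau.
  by apply/set0Pn; apply: contraTneq tau2 => ->; rewrite cards0.
have [|t [c [t_tau ud_t c_min]]] := @seq_extremum _ _ <=%R (enum tau)
    (is_unique_dist w F s tau) le_total (@le_trans _ _) (@unique_dist_fun F).
  by exists t0; [rewrite mem_enum | apply: ud_F].
exists c; split=> //; split; first by exists t => //; rewrite -mem_enum.
by move=> t1 u1 t1_tau; apply: c_min; rewrite mem_enum.
Qed.

Lemma reaches_targetsP F :
  reflect (reaches_targets F) [forall t in tau, connect (edge_rel F) s t].
Proof.
by apply: (iffP forall_inP) => reachF t /reachF /reachableP.
Qed.

Lemma reaches_targets_setD1 F u v : reaches_targets F ->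
  (reachable (F :\ (u, v)) s u -> reachable (F :\ (u, v)) s v) ->
  reaches_targets (F :\ (u, v)).
Proof.
move=> reachF uv t /reachF; apply: reachable_ind (reachable_refl _ s) _.
move=> a c ac; case: (eqVneq (a, c) (u, v)) => [[-> ->] //|ne].
by move=> /reachable_rcons; apply; rewrite in_setD1 ne.
Qed.

Lemma exists_minimal_reaching_subset F : reaches_targets F ->
  exists2 F' : {set V * V}, F' \subset F &
    reaches_targets F' /\ forall e, e \in F' -> ~ reaches_targets (F' :\ e).
Proof.
move=> /reaches_targetsP reachF.
pose P (F' : {set V * V}) := (F' \subset F) && [forall t in tau, connect (edge_rel F') s t].
have PF : P F by rewrite /P subxx.
case: (arg_minnP (fun F' => #|F'|) PF) => F' /andP[F'F /reaches_targetsP reachF'] F'_min.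
exists F' => //; split=> // e e_F' /reaches_targetsP reach_e.
have := F'_min (F' :\ e); rewrite /P reach_e (subset_trans (subD1set F' e)) //.
by rewrite (cardsD1 e F') e_F' ltnn => /(_ isT).
Qed.

Lemma reachable_last_edge F x v : reachable F x v -> x != v ->
  exists2 z, (z, v) \in F & forall a, a != z -> reachable (F :\ (a, v)) x v.
Proof.
move=> [p [xp <-]]; case: (shortenP xp) => p' xp' uniq_p' _.
case/lastP: p' xp' uniq_p' => [|q z] xp' uniq_p'; first by rewrite eqxx.
rewrite last_rcons => xz; move: xp'; rewrite /spath rcons_path => /andP[xq qz].
exists (last x q) => // a a_q; exists (rcons q z); split; last exact: last_rcons.
rewrite /spath rcons_path -/(spath (F :\ (a, z)) x q) spath_setD1 //; last first.
  by move: uniq_p'; rewrite -rcons_cons rcons_uniq inE negb_or => /andP[/andP[]].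
by rewrite in_setD1 qz andbT xpair_eqE eqxx andbT eq_sym.
Qed.

Section MinimalReachingSubset.
Variable F : {set V * V}.
Hypotheses (reachF : reaches_targets F)
  (F_min : forall e, e \in F -> ~ reaches_targets (F :\ e)).

Lemma edge_needed u v : (u, v) \in F ->
  ~ (reachable (F :\ (u, v)) s u -> reachable (F :\ (u, v)) s v).
Proof. by move=> uv imp; apply: (F_min uv); apply: reaches_targets_setD1. Qed.

Lemma no_edge_into_source v : (v, s) \notin F.
Proof. by apply/negP => vs; apply: (edge_needed vs) => _; apply: reachable_refl. Qed.

Lemma edge_tail_reachable u v : (u, v) \in F -> reachable F s u.
Proof.
move=> uv; apply: NNPP => not_reach_u; apply: (edge_needed uv) => reach_u.
by case: not_reach_u; apply: reachable_subset reach_u; apply: subD1set.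
Qed.

Lemma edge_head_uniq a c v : (a, v) \in F -> (c, v) \in F -> a = c.
Proof.
move=> av cv; have s_v : s != v by apply: contraNneq (no_edge_into_source a) => ->.
have [z _ avoid_z] := reachable_last_edge (reachable_rcons (edge_tail_reachable av) av) s_v.
suff needs_z a' : (a', v) \in F -> a' = z by rewrite (needs_z a av) (needs_z c cv).
move=> a'v; apply/eqP/negPn/negP => a'_z.
by apply: (edge_needed a'v) => _; apply: avoid_z.
Qed.

Lemma cycle_rotate u v c : (u, v) \in F -> spath F v c -> last v c = v ->
  c != [::] -> exists2 c', spath F u c' /\ last u c' = u & c' != [::].
Proof.
move=> uv; case/lastP: c => [|c z] // + + _; rewrite last_rcons => vcz zv.
subst z; move: vcz; rewrite /spath rcons_path => /andP[vc cv].
exists (v :: c) => //; split; first by rewrite /spath /= uv.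
by rewrite /= (edge_head_uniq uv cv).
Qed.

Lemma no_cycle_reachable q c : spath F s q -> spath F (last s q) c ->
  last (last s q) c = last s q -> c != [::] -> False.
Proof.
elim/last_ind: q c => [|q y IH] c.
  move=> _; case/lastP: c => [|c z] //= + + _; rewrite last_rcons => sc zs.
  by move: sc; rewrite zs /spath rcons_path (negbTE (no_edge_into_source _)) andbF.
rewrite /spath rcons_path last_rcons => /andP[sq qy] yc yc_y c0.
have [c' [qc' qc'_q] c'0] := cycle_rotate qy yc yc_y c0.
exact: IH qc' qc'_q c'0.
Qed.

Lemma minimal_reaching_acyclic : acyclic F.
Proof.
move=> x [|y p] // xp xp_x; exfalso.
have xy : (x, y) \in F by case/andP: xp.
have [q [sq qx]] := edge_tail_reachable xy.
by move: xp xp_x; rewrite -qx => xp xp_x; apply: no_cycle_reachable sq xp xp_x _.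
Qed.

Lemma minimal_reaching_unique_source :
  unique_source [set y | connect (edge_rel F) s y] F s.
Proof.
split; first by rewrite inE connect0.
split=> [v|u]; first exact: no_edge_into_source.
rewrite inE => /reachableP[p [sp <-]] src_u.
case/lastP: p sp src_u => [//|q z] sp; rewrite last_rcons => /(_ (last s q)).
by move: sp; rewrite /spath rcons_path => /andP[_ ->].
Qed.

End MinimalReachingSubset.

Lemma cost_subset F F' : nonneg F -> F' \subset F -> cost w F' <= cost w F.
Proof.
move=> nnF F'F; rewrite /cost [leRHS](big_setID F') /= (setIidPr F'F) lerDl.
by apply: sumr_ge0 => -[a c] /setDP[ac _]; apply: nnF.
Qed.

Lemma feasible_nonneg b VS F : (forall u v, E u v -> 0 <= w u v) ->
  feasible E w s tau b VS F -> nonneg F.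
Proof. by move=> w_ge0 [subF _ _ _ _] a c /subF /and3P[/w_ge0]. Qed.

Lemma feasible_acyclic_subgraph b VS F : (forall u v, E u v -> 0 <= w u v) ->
  feasible E w s tau b VS F ->
  exists VS' F', [/\ feasible E w s tau b VS' F', F' \subset F, acyclic F'
                   & unique_source VS' F' s].
Proof.
move=> w_ge0 feasF; have nnF := feasible_nonneg w_ge0 feasF.
case: feasF => subF s_VS tau_VS reachF costF.
have [F' F'F [reachF' F'_min]] := exists_minimal_reaching_subset reachF.
pose VS' := [set y | connect (edge_rel F') s y].
have VS'_reach y : reachable F' s y -> y \in VS' by rewrite inE => /reachableP.
exists VS', F'; split=> //.
- split=> //.
  + move=> [a c] ac /=; have /and3P[Eac _ _] := subF _ (subsetP F'F _ ac).
    have reach_a := edge_tail_reachable reachF' F'_min ac.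
    by rewrite Eac !VS'_reach //; apply: reachable_rcons reach_a ac.
  + by rewrite VS'_reach //; apply: reachable_refl.
  + by apply/subsetP => t /reachF'/VS'_reach.
  + exact: le_trans (cost_subset nnF F'F) costF.
- exact: minimal_reaching_acyclic reachF' F'_min.
- exact: minimal_reaching_unique_source reachF' F'_min.
Qed.

End Counterdeceptiveness.

Theorem lemma2 (R : realType) (V : finType) (E : rel V) (w : V -> V -> R)
    (s : V) (tau : {set V}) (b : R) :
  (forall u v, E u v -> 0 <= w u v) ->
  s \notin tau -> (2 <= #|tau|)%N -> 0 <= b ->
  (exists VS ES, feasible E w s tau b VS ES) ->
  exists VS ES, is_maximizer E w s tau b VS ES /\
    acyclic ES /\ unique_source VS ES s.
Proof.
move=> w_ge0 _ tau2 _ [VS0 [ES0 feas0]].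
have [VS1 [ES1 [feas1 _ ac1 _]]] := feasible_acyclic_subgraph w_ge0 feas0.
have [_ _ _ reach1 _] := feas1; have [c1 CD1] := CD_exists w ac1 tau2 reach1.
pose Q ES c := (exists VS, feasible E w s tau b VS ES) /\ is_CD w ES s tau c.
have Q_fun ES c c' : Q ES c -> Q ES c' -> c = c'.
  by move=> [_ CD] [_ CD']; apply: CD_fun CD CD'.
have [|ES [c [_ [[VS feas] CD] c_max]]] :=
  @seq_extremum _ _ (fun c c' => c' <= c) (enum [set: {set V * V}]) Q
    (fun c c' => le_total c' c) (fun _ _ _ le1 le2 => le_trans le2 le1) Q_fun.
  by exists ES1; [rewrite mem_enum inE | exists c1; split; first exists VS1].
have [VS2 [ES2 [feas2 ES2_ES ac2 src2]]] := feasible_acyclic_subgraph w_ge0 feas.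
have [_ _ _ reach2 _] := feas2; have [c2 CD2] := CD_exists w ac2 tau2 reach2.
exists VS2, ES2; split=> //; split=> //; exists c2; split=> // VS' ES' c' feas' CD'.
apply: le_trans (CD_antitone ES2_ES (feasible_nonneg w_ge0 feas) CD CD2).
apply: (c_max ES'); first by rewrite mem_enum inE.
by split; first exists VS'.
Qed.
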